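(* Let $m,n\ge 2$. The Hadamard product of two $m$th order $n$-dimensional strong Hankel tensors is a strong Hankel tensor.
   Context: An $m$th order $n$-dimensional real tensor $\mathcal{A}=(a_{i_1\cdots i_m})$ is a Hankel tensor if there is $v=(v_0,\dots,v_{(n-1)m})^\top\in\mathbb{R}^{(n-1)m+1}$ with $a_{i_1\cdots i_m}=v_{i_1+\cdots+i_m-m}$ for all $i_j\in\{1,\dots,n\}$. Let $N=\lceil((n-1)m+2)/2\rceil$. An associated Hankel matrix of $\mathcal{A}$ is the $N\times N$ matrix with $(i,j)$ entry $v_{i+j-2}$, where, if $(n-1)m$ is odd, $v_{2\lceil(n-1)m/2\rceil}$ is an additional (arbitrary) real number. $\mathcal{A}$ is a strong Hankel tensor if an associated Hankel matrix of it is positive semi-definite. The Hadamard product of $\mathcal{A}=(a_{i_1\cdots i_m})$ and $\mathcal{B}=(b_{i_1\cdots i_m})$ is $\mathcal{A}\circ\mathcal{B}=(a_{i_1\cdots i_m}b_{i_1\cdots i_m})$. *)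

From mathcomp Require Import all_boot all_order all_algebra.
Set Implicit Arguments. Unset Strict Implicit. Unset Printing Implicit Defensive.
Import Order.TTheory GRing.Theory Num.Theory.
Local Open Scope ring_scope.

(* An m-th order n-dimensional real tensor: entries indexed by m-tuples of
   indices in {0,...,n-1} (0-based; the paper's i_j corresponds to i_j - 1). *)
Definition tensor (R : Type) (m n : nat) := m.-tuple 'I_n -> R.

(* sum of the (0-based) indices: i_1 + ... + i_m - m in the paper's 1-based convention *)
Definition idx_sum (m n : nat) (i : m.-tuple 'I_n) : nat :=
  (\sum_(k <- i) (nat_of_ord k))%N.

(* A is Hankel with generating vector v; v is represented as a function
   nat -> R of which only v_0, ..., v_{(n-1)m} matter (idx_sum i <= (n-1)m). *)
Definition hankel_gen (R : Type) (m n : nat) (A : tensor R m n) (v : nat -> R) : Prop :=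
  forall i : m.-tuple 'I_n, A i = v (idx_sum i).

Definition is_hankel_tensor (R : Type) (m n : nat) (A : tensor R m n) : Prop :=
  exists v, hankel_gen A v.

(* N = ceil(((n-1)m + 2)/2) *)
Definition hankel_N (m n : nat) : nat := ((n.-1 * m).+3)./2.

Definition hankel_matrix (R : Type) (N : nat) (w : nat -> R) : 'M[R]_N :=
  \matrix_(i < N, j < N) w (i + j)%N.

Definition psd (R : numDomainType) (N : nat) (M : 'M[R]_N) : Prop :=
  forall x : 'cV[R]_N, 0 <= (x^T *m M *m x) 0 0.

(* When (n-1)m is odd the matrix uses the entry
   v_{(n-1)m+1}, which is not determined by A: since v is an arbitrary
   function nat -> R, that entry is an arbitrary real number, as in the paper. *)
Definition is_assoc_hankel_matrix (R : Type) (m n : nat) (A : tensor R m n)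
    (H : 'M[R]_(hankel_N m n)) : Prop :=
  exists v : nat -> R, hankel_gen A v /\ H = hankel_matrix (hankel_N m n) v.

Definition is_strong_hankel (R : numDomainType) (m n : nat) (A : tensor R m n) : Prop :=
  is_hankel_tensor A /\
  exists H : 'M[R]_(hankel_N m n), is_assoc_hankel_matrix A H /\ psd H.

Definition hadamard (R : pzRingType) (m n : nat) (A B : tensor R m n) : tensor R m n :=
  fun i => A i * B i.

From mathcomp Require Import all_boot all_order all_algebra.
From mathcomp Require Import ring lra.
Import Order.TTheory GRing.Theory Num.Theory.
Local Open Scope ring_scope.

(* The associated Hankel matrix of A o B may be taken to be the Hadamard
   product of those of A and B, so the theorem is an instance of the Schur
   product theorem: the entrywise product of two symmetric positive
   semidefinite matrices is positive semidefinite. Over an arbitrary real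
   field there is no spectral decomposition, so we argue by induction on the
   number of nonzero diagonal entries of the first factor A. If A k k > 0,
   then A = A' + (A k k)^-1 a a^T with a the k-th column of A and A' the Schur
   complement of A k k; A' is again psd, has strictly fewer nonzero diagonal
   entries, and (a a^T) o B is psd because x^T ((a a^T) o B) x is the
   B-form at the vector (a_i x_i)_i. *)

Lemma affine_ge0_slope0 (R : realFieldType) (a b : R) :
  (forall t, 0 <= a + t * b) -> b = 0.
Proof.
move=> ge0; apply/eqP/negPn/negP => b_neq0.
have := ge0 (- (a + 1) / b).
by rewrite mulrVK ?unitfE //; lra.
Qed.

Section QuadraticForm.
Context {R : realFieldType} {N : nat}.
Implicit Types (A B : 'M[R]_N) (x : 'I_N -> R).

Definition qform A x := \sum_i \sum_j x i * A i j * x j.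

Definition psd_qform A := forall x, 0 <= qform A x.

Definition mx_sym A := forall i j, A i j = A j i.

Definition evec (k : 'I_N) : 'I_N -> R := fun i => (i == k)%:R.

Definition diag_support A := [set k | A k k != 0].

Lemma psdP A : psd A <-> psd_qform A.
Proof.
have qformE (x : 'cV[R]_N) : (x^T *m A *m x) 0 0 = qform A (fun i => x i 0).
  rewrite /qform mxE exchange_big; apply: eq_bigr => j _.
  by rewrite mxE mulr_suml; apply: eq_bigr => i _; rewrite mxE.
split=> psdA x; last by rewrite qformE.
have := psdA (\col_i x i); rewrite qformE /qform.
by under eq_bigr => i _ do under eq_bigr => j _ do rewrite !mxE.
Qed.

Lemma sum_evec k (F : 'I_N -> R) : \sum_i evec k i * F i = F k.
Proof.
rewrite (bigD1 k) //= /evec eqxx mul1r big1 ?addr0 // => i /negbTE ->.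
by rewrite mul0r.
Qed.

Lemma qform_evec A k : qform A (evec k) = A k k.
Proof.
rewrite /qform; under eq_bigr => i _ do under eq_bigr => j _ do rewrite mulrC.
by under eq_bigr => i _ do rewrite sum_evec; rewrite sum_evec.
Qed.

Lemma qform_add_evec A x k t : mx_sym A ->
  qform A (fun i => x i + t * evec k i)
  = qform A x + 2 * t * (\sum_j A k j * x j) + t ^+ 2 * A k k.
Proof.
move=> symA; rewrite -qform_evec.
have cross : \sum_i \sum_j (evec k i * A i j * x j + x i * A i j * evec k j)
    = 2 * \sum_j A k j * x j.
  have left : \sum_i \sum_j evec k i * A i j * x j = \sum_j A k j * x j.
    under eq_bigr => i _ do under eq_bigr => j _ do rewrite -mulrA.
    by under eq_bigr => i _ do rewrite -mulr_sumr; rewrite sum_evec.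
  have right : \sum_i \sum_j x i * A i j * evec k j = \sum_j A k j * x j.
    under eq_bigr => i _ do under eq_bigr => j _ do rewrite mulrC.
    by apply: eq_bigr => i _; rewrite sum_evec symA mulrC.
  under eq_bigr => i _ do rewrite big_split.
  by rewrite big_split /= left right mulr2n mulrDl mul1r.
transitivity (qform A x + t * (\sum_i \sum_j
    (evec k i * A i j * x j + x i * A i j * evec k j))
  + t ^+ 2 * qform A (evec k)); last by rewrite cross mulrA (mulrC t).
rewrite /qform !mulr_sumr -!big_split; apply: eq_bigr => i _.
rewrite !mulr_sumr -!big_split; apply: eq_bigr => j _ /=; ring.
Qed.

Definition schur_compl A k : 'M[R]_N :=
  \matrix_(i, j) (A i j - A i k * A k j / A k k).

Section PsdSymmetric.
Context {A : 'M[R]_N}.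
Hypotheses (symA : mx_sym A) (psdA : psd_qform A).

Lemma psd_diag_ge0 k : 0 <= A k k.
Proof. by rewrite -qform_evec. Qed.

Lemma psd_row_eq0 k j : A k k = 0 -> A k j = 0.
Proof.
move=> Akk0; apply: (@affine_ge0_slope0 _ (A j j)) => t.
have := psdA (fun i => evec j i + (t / 2) * evec k i).
rewrite qform_add_evec // qform_evec Akk0.
under eq_bigr => i _ do rewrite mulrC.
by rewrite sum_evec; lra.
Qed.

Lemma schur_compl_sym k : mx_sym (schur_compl A k).
Proof. by move=> i j; rewrite !mxE (symA i j) (symA i k) (symA k j); ring. Qed.

(* Completing the square in the k-th coordinate. *)
Lemma qform_schur_compl k x : A k k != 0 ->
  qform (schur_compl A k) x
  = qform A (fun i => x i + (- ((\sum_j A k j * x j) / A k k)) * evec k i).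
Proof.
move=> Akk_neq0; rewrite qform_add_evec //.
transitivity (qform A x - (\sum_j A k j * x j) ^+ 2 / A k k); last first.
  by field.
rewrite /qform expr2 -mulrA mulr_suml -sumrB; apply: eq_bigr => i _.
rewrite mulr_suml mulr_sumr -sumrB; apply: eq_bigr => j _.
by rewrite mxE (symA i k); field.
Qed.

Lemma schur_compl_psd k : A k k != 0 -> psd_qform (schur_compl A k).
Proof. by move=> Akk_neq0 x; rewrite qform_schur_compl. Qed.

Lemma diag_support_schur_compl k : A k k != 0 ->
  diag_support (schur_compl A k) \proper diag_support A.
Proof.
move=> Akk_neq0; apply/properP; split.
  apply/subsetP => j; rewrite !inE mxE; apply: contraNN => /eqP Ajj0.
  by rewrite (symA k j) (psd_row_eq0 _ k Ajj0) mul0r mul0r subr0 Ajj0.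
by exists k; rewrite !inE // mxE negbK -mulrA mulfV // mulr1 subrr.
Qed.

Lemma qform_hadamard_schur_compl B k x : A k k != 0 ->
  qform (map2_mx *%R A B) x
  = qform (map2_mx *%R (schur_compl A k) B) x
    + (A k k)^-1 * qform B (fun i => A i k * x i).
Proof.
move=> Akk_neq0; rewrite /qform mulr_sumr -big_split; apply: eq_bigr => i _.
rewrite mulr_sumr -big_split; apply: eq_bigr => j _.
by rewrite !mxE (symA k j) /=; field.
Qed.

End PsdSymmetric.

Lemma hadamard_psd A B : mx_sym A -> psd_qform A -> psd_qform B ->
  psd_qform (map2_mx *%R A B).
Proof.
move=> + + psdB; have [n] := ubnP #|diag_support A|.
elim: n A => // n IHn A supp_lt symA psdA x.
case: (set_0Vmem (diag_support A)) => [supp0 | [k]].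
  rewrite /qform big1 // => i _; rewrite big1 // => j _.
  rewrite mxE; suff -> : A i j = 0 by rewrite mul0r mulr0 mul0r.
  apply: psd_row_eq0 => //.
  by have := in_set0 i; rewrite -supp0 inE => /negbFE /eqP.
rewrite inE => Akk_neq0.
rewrite (qform_hadamard_schur_compl symA _ _ _ Akk_neq0).
apply: addr_ge0; last by rewrite mulr_ge0 ?invr_ge0 ?psd_diag_ge0.
apply: IHn; [|exact: schur_compl_sym|exact: schur_compl_psd].
have := proper_card (diag_support_schur_compl symA psdA _ Akk_neq0).
by move=> lt_supp; rewrite -ltnS (leq_trans _ supp_lt).
Qed.

End QuadraticForm.

Lemma hankel_matrix_sym {R : realFieldType} {N : nat} (v : nat -> R) :
  mx_sym (hankel_matrix N v).
Proof. by move=> i j; rewrite !mxE addnC. Qed.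

Lemma hankel_matrix_mul {R : pzRingType} {N : nat} (v w : nat -> R) :
  hankel_matrix N (fun k => v k * w k)
  = map2_mx *%R (hankel_matrix N v) (hankel_matrix N w).
Proof. by apply/matrixP => i j; rewrite !mxE. Qed.

Lemma hankel_gen_hadamard {R : pzRingType} {m n : nat} {A B : tensor R m n}
    {v w : nat -> R} :
  hankel_gen A v -> hankel_gen B w ->
  hankel_gen (hadamard A B) (fun k => v k * w k).
Proof. by move=> genA genB i; rewrite /hadamard genA genB. Qed.

Theorem proposition2 (R : realFieldType) (m n : nat) (hm : (2 <= m)%N) (hn : (2 <= n)%N)
    (A B : tensor R m n) :
  is_strong_hankel A -> is_strong_hankel B -> is_strong_hankel (hadamard A B).
Proof.
move=> [_ [_ [[v [genA ->]] /psdP psdA]]] [_ [_ [[w [genB ->]] /psdP psdB]]].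
have genAB := hankel_gen_hadamard genA genB.
split; first by exists (fun k => v k * w k).
exists (hankel_matrix (hankel_N m n) (fun k => v k * w k)).
split; first by exists (fun k => v k * w k).
apply/psdP; rewrite hankel_matrix_mul.
by apply: hadamard_psd => //; apply: hankel_matrix_sym.
Qed.
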